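(* Let $\alpha,\beta$ be sets, $z\in\beta$, $\mathit{seq}:\beta\times\alpha\to\beta$, $\mathit{comb}:\beta\times\beta\to\beta$. Calls $\mathrm{treeAggregate}(z,\mathit{seq},\mathit{comb},\mathit{rdd})$ have deterministic outcomes if and only if calls $\mathrm{aggregate}(z,\mathit{seq},\mathit{comb},\mathit{rdd})$ have deterministic outcomes.
   Context: Lists are finite; $\mathbin{+\!\!+}$ is concatenation. $\mathrm{foldl}(f,b,[\,])=b$, $\mathrm{foldl}(f,b,[x_1,\dots,x_n])=f(\cdots f(f(b,x_1),x_2)\cdots,x_n)$. An RDD is a list of lists. A partitioning is a function $P$ sending each list $L$ over $\alpha$ to a nonempty RDD obtained by splitting $L$ into consecutive (possibly empty) pieces $p_1,\dots,p_n$ ($n\ge1$) with $p_1\mathbin{+\!\!+}\cdots\mathbin{+\!\!+}p_n=L$ and then arbitrarily permuting $[p_1,\dots,p_n]$. $\mathrm{aggregate}_{\mathrm{det}}(z,\mathit{seq},\mathit{comb},[q_1,\dots,q_m])=\mathrm{foldl}(\mathit{comb},z,[\mathrm{foldl}(\mathit{seq},z,q_1),\dots,\mathrm{foldl}(\mathit{seq},z,q_m)])$; calls to $\mathrm{aggregate}$ have deterministic outcomes if $\mathrm{aggregate}_{\mathrm{det}}(z,\mathit{seq},\mathit{comb},P(L))=\mathrm{foldl}(\mathit{seq},z,L)$ for all $L$ and all partitionings $P$. An instantiation of $\mathrm{apply}$ is any deterministic procedure which, given $\mathit{comb}$ and a nonempty list $[r_1,\dots,r_m]$, returns the single value obtained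 by repeatedly choosing two adjacent elements $l',r'$ of the current list and replacing them by $\mathit{comb}(l',r')$ until one element remains (equivalently, evaluating $\mathit{comb}$ along some binary tree whose leaves are $r_1,\dots,r_m$ in order). $\mathrm{treeAggregate}_{\mathrm{bt}}(\mathrm{apply},z,\mathit{seq},\mathit{comb},[q_1,\dots,q_m])=\mathrm{apply}(\mathit{comb},[\mathrm{foldl}(\mathit{seq},z,q_1),\dots,\mathrm{foldl}(\mathit{seq},z,q_m)])$. Calls $\mathrm{treeAggregate}(z,\mathit{seq},\mathit{comb},\mathit{rdd})$ have deterministic outcomes if $\mathrm{treeAggregate}_{\mathrm{bt}}(\mathrm{apply},z,\mathit{seq},\mathit{comb},P(L))=\mathrm{foldl}(\mathit{seq},z,L)$ for all lists $L$, partitionings $P$, and instantiations $\mathrm{apply}$. *)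

From Stdlib Require Import List Permutation.
Import ListNotations.
Set Implicit Arguments.

Definition foldl {A B : Type} (f : B -> A -> B) (b : B) (L : list A) : B :=
  fold_left f L b.

Definition is_partitioning {A : Type} (P : list A -> list (list A)) : Prop :=
  forall L : list A,
    exists ps : list (list A),
      ps <> [] /\ concat ps = L /\ Permutation ps (P L).

Definition aggregate_det {A B : Type} (z : B) (sq : B -> A -> B)
    (comb : B -> B -> B) (rdd : list (list A)) : B :=
  foldl comb z (map (fun q => foldl sq z q) rdd).

Definition aggregate_deterministic {A B : Type} (z : B) (sq : B -> A -> B)
    (comb : B -> B -> B) : Prop :=
  forall P : list A -> list (list A), is_partitioning P ->
    forall L : list A, aggregate_det z sq comb (P L) = foldl sq z L.

Inductive btree (B : Type) : Type :=
| BLeaf : B -> btree B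
| BNode : btree B -> btree B -> btree B.
Arguments BLeaf {B} _.
Arguments BNode {B} _ _.

Fixpoint leaves {B : Type} (t : btree B) : list B :=
  match t with
  | BLeaf x => [x]
  | BNode l r => leaves l ++ leaves r
  end.

Fixpoint eval_tree {B : Type} (comb : B -> B -> B) (t : btree B) : B :=
  match t with
  | BLeaf x => x
  | BNode l r => comb (eval_tree comb l) (eval_tree comb r)
  end.

Definition is_apply_instantiation {B : Type}
    (apply : (B -> B -> B) -> list B -> B) : Prop :=
  forall (comb : B -> B -> B) (rs : list B), rs <> [] ->
    exists t : btree B, leaves t = rs /\ apply comb rs = eval_tree comb t.

Definition treeAggregate_bt {A B : Type}
    (apply : (B -> B -> B) -> list B -> B) (z : B) (sq : B -> A -> B)
    (comb : B -> B -> B) (rdd : list (list A)) : B :=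
  apply comb (map (fun q => foldl sq z q) rdd).

Definition treeAggregate_deterministic {A B : Type} (z : B) (sq : B -> A -> B)
    (comb : B -> B -> B) : Prop :=
  forall (P : list A -> list (list A)) (apply : (B -> B -> B) -> list B -> B),
    is_partitioning P -> is_apply_instantiation apply ->
    forall L : list A, treeAggregate_bt apply z sq comb (P L) = foldl sq z L.

(** If [aggregate] is deterministic then, using the one-piece and the
    two-piece partitionings, [comb z (foldl sq z a) = foldl sq z a] and
    [comb (foldl sq z a) (foldl sq z b) = foldl sq z (a ++ b)]; so
    [foldl sq z] turns [comb] into concatenation, every binary tree over the
    partial results evaluates to [foldl sq z] of the concatenated pieces, and
    [treeAggregate] agrees with [aggregate].  Conversely, [treeAggregate] may
    use the left-comb tree, and a partitioning may add an empty first piece,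
    whose partial result [foldl sq z [] = z] plays the role of the initial
    value of [aggregate]'s outer fold. *)

From Stdlib Require Import List Permutation Arith.
Import ListNotations.
Set Implicit Arguments.

Section Partitionings.
Variable A : Type.

Lemma is_partitioning_singleton : is_partitioning (fun L : list A => [L]).
Proof.
  intros L; exists [L]; repeat split.
  - discriminate.
  - apply app_nil_r.
  - reflexivity.
Qed.

Lemma is_partitioning_split (n : nat) :
  is_partitioning (fun L : list A => [firstn n L; skipn n L]).
Proof.
  intros L; exists [firstn n L; skipn n L]; repeat split.
  - discriminate.
  - simpl; rewrite app_nil_r; apply firstn_skipn.
  - reflexivity.
Qed.

Lemma is_partitioning_cons_nil (P : list A -> list (list A)) :
  is_partitioning P -> is_partitioning (fun L => [] :: P L).
Proof.
  intros HP L; destruct (HP L) as (ps & _ & Hcat & Hperm).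
  exists ([] :: ps); repeat split.
  - discriminate.
  - exact Hcat.
  - now constructor.
Qed.

Lemma partitioning_nonempty (P : list A -> list (list A)) (L : list A) :
  is_partitioning P -> P L <> [].
Proof.
  intros HP HPL; destruct (HP L) as (ps & Hne & _ & Hperm).
  rewrite HPL in Hperm; apply Permutation_sym, Permutation_nil in Hperm; contradiction.
Qed.

End Partitionings.

Section LeftCombApply.
Variable B : Type.

Definition left_comb_tree (t : btree B) (xs : list B) : btree B :=
  fold_left (fun t x => BNode t (BLeaf x)) xs t.

Lemma leaves_left_comb_tree (xs : list B) (t : btree B) :
  leaves (left_comb_tree t xs) = leaves t ++ xs.
Proof.
  revert t; induction xs as [|x xs IH]; intros t; simpl.
  - symmetry; apply app_nil_r.
  - unfold left_comb_tree in *; rewrite IH; simpl; now rewrite <- app_assoc.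
Qed.

Lemma eval_left_comb_tree (comb : B -> B -> B) (xs : list B) (t : btree B) :
  eval_tree comb (left_comb_tree t xs) = foldl comb (eval_tree comb t) xs.
Proof.
  revert t; induction xs as [|x xs IH]; intros t; [reflexivity|].
  apply IH.
Qed.

(* The default [d] is a junk value: instantiations of apply are only
   constrained on nonempty lists. *)
Definition left_apply (d : B) (comb : B -> B -> B) (rs : list B) : B :=
  match rs with [] => d | r :: rs => foldl comb r rs end.

Lemma left_apply_instantiation (d : B) : is_apply_instantiation (left_apply d).
Proof.
  intros comb [|r rs] Hne; [contradiction|].
  exists (left_comb_tree (BLeaf r) rs); split.
  - apply leaves_left_comb_tree.
  - symmetry; apply eval_left_comb_tree.
Qed.

End LeftCombApply.

Section CombHomomorphism.
Variables (A B : Type) (comb : B -> B -> B) (g : list A -> B).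
Hypothesis comb_app : forall a b, comb (g a) (g b) = g (a ++ b).

Lemma foldl_comb_map (a : list A) (qs : list (list A)) :
  foldl comb (g a) (map g qs) = g (a ++ concat qs).
Proof.
  revert a; induction qs as [|q qs IH]; intros a; simpl.
  - now rewrite app_nil_r.
  - now rewrite comb_app, IH, app_assoc.
Qed.

Lemma eval_tree_map (t : btree B) (qs : list (list A)) :
  leaves t = map g qs -> eval_tree comb t = g (concat qs).
Proof.
  revert qs; induction t as [x|l IHl r IHr]; intros qs Hleaves; simpl in *.
  - destruct qs as [|q [|q' qs]]; try discriminate.
    injection Hleaves as ->; simpl; now rewrite app_nil_r.
  - symmetry in Hleaves; apply map_eq_app in Hleaves.
    destruct Hleaves as (q1 & q2 & -> & Hl & Hr).
    now rewrite (IHl q1), (IHr q2), comb_app, concat_app.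
Qed.

End CombHomomorphism.

Section Aggregate.
Variables (A B : Type) (z : B) (sq : B -> A -> B) (comb : B -> B -> B).

Lemma aggregate_deterministic_comb_foldl :
  aggregate_deterministic z sq comb ->
  forall a b, comb (foldl sq z a) (foldl sq z b) = foldl sq z (a ++ b).
Proof.
  intros AD a b.
  assert (comb_z : comb z (foldl sq z a) = foldl sq z a)
    by exact (AD _ (@is_partitioning_singleton A) a).
  pose proof (AD _ (@is_partitioning_split A (length a)) (a ++ b)) as E.
  unfold aggregate_det in E; simpl in E.
  rewrite firstn_app, skipn_app, Nat.sub_diag, firstn_all, skipn_all,
    app_nil_r in E.
  simpl in E; now rewrite comb_z in E.
Qed.

Hypothesis comb_foldl : forall a b,
  comb (foldl sq z a) (foldl sq z b) = foldl sq z (a ++ b).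

Lemma aggregate_det_concat (rdd : list (list A)) :
  aggregate_det z sq comb rdd = foldl sq z (concat rdd).
Proof. exact (foldl_comb_map _ _ comb_foldl [] rdd). Qed.

Lemma treeAggregate_bt_concat (apply : (B -> B -> B) -> list B -> B)
    (rdd : list (list A)) :
  is_apply_instantiation apply -> rdd <> [] ->
  treeAggregate_bt apply z sq comb rdd = foldl sq z (concat rdd).
Proof.
  intros Happly Hne.
  assert (Hne' : map (foldl sq z) rdd <> []).
  { intros E; apply map_eq_nil in E; contradiction. }
  destruct (Happly comb _ Hne') as (t & Hleaves & Heval).
  transitivity (eval_tree comb t); [exact Heval|].
  exact (eval_tree_map _ _ comb_foldl t rdd Hleaves).
Qed.

End Aggregate.

Lemma treeAggregate_bt_left_apply {A B : Type} (z : B) (sq : B -> A -> B)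
    (comb : B -> B -> B) (rdd : list (list A)) :
  treeAggregate_bt (left_apply z) z sq comb ([] :: rdd)
  = aggregate_det z sq comb rdd.
Proof. reflexivity. Qed.

Theorem proposition1 (A B : Type) (z : B) (sq : B -> A -> B) (comb : B -> B -> B) :
  treeAggregate_deterministic z sq comb <-> aggregate_deterministic z sq comb.
Proof.
  split.
  - intros TD P HP L.
    rewrite <- treeAggregate_bt_left_apply.
    exact (TD _ _ (is_partitioning_cons_nil HP) (left_apply_instantiation z) L).
  - intros AD P apply HP Happly L.
    pose proof (aggregate_deterministic_comb_foldl AD) as comb_foldl.
    rewrite (treeAggregate_bt_concat _ _ _ comb_foldl Happly
               (partitioning_nonempty L HP)).
    rewrite <- (aggregate_det_concat _ _ _ comb_foldl).
    apply AD, HP.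
Qed.
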